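(* Let $R$ be a ring. \begin{enumerate} \item Every Ore set of $R$ is a localizable set of $R$. \item If $S$ is an Ore set of $R$, then $S$ is localizable with $\mathrm{ass}_R(S)=\mathfrak{a}$, where $\mathfrak{a}=\{r\in R: srt=0\text{ for some } s,t\in S\}$, and $R\langle S^{-1}\rangle$ is $R$-isomorphic to the Ore localization $\overline{S}^{-1}\overline{R}$, where $\overline{R}=R/\mathfrak{a}$ and $\overline{S}$ is the image of $S$ in $\overline{R}$ (a denominator set of $\overline{R}$). \end{enumerate}
   Context: Rings are associative with $1$. Multiplicative set: $SS\subseteq S$, $1\in S$, $0\notin S$. Ore set: $Sr\cap Rs\neq\emptyset$ and $rS\cap sR\neq\emptyset$ for all $r\in R,s\in S$. $R\langle S^{-1}\rangle=R\langle X_S\rangle/I_S$, where $R\langle X_S\rangle$ is freely generated by $R$ and noncommuting indeterminates $x_s$ ($s\in S$) and $I_S$ is generated by $sx_s-1,x_ss-1$; $\mathrm{ass}_R(S)=\ker(R\to R\langle S^{-1}\rangle)$. $S$ is localizable if $R\langle S^{-1}\rangle\ne0$ and every element is both of the form $(x_s+I_S)(r+I_S)$ and of the form $(r'+I_S)(x_{s'}+I_S)$, $s,s'\in S$, $r,r'\in R$. *)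

From HB Require Import structures.
From mathcomp Require Import all_boot all_order all_algebra.
Set Implicit Arguments. Unset Strict Implicit. Unset Printing Implicit Defensive.
Import GRing.Theory.
Local Open Scope ring_scope.

(* Rings: associative with 1 (pzRingType, the zero ring is not excluded). *)

Definition multiplicative_set (R : pzRingType) (S : R -> Prop) : Prop :=
  [/\ S 1, ~ S 0 & forall s t, S s -> S t -> S (s * t)].

Definition ore_set (R : pzRingType) (S : R -> Prop) : Prop :=
  multiplicative_set S /\
  forall r s, S s ->
    (exists s' r', S s' /\ s' * r = r' * s) /\
    (exists s' r', S s' /\ r * s' = s * r').

(* Terms of the free ring R<X_S> generated by (the ring) R and
   noncommuting indeterminates x_s, s ∈ S. *)
Inductive lterm (R : pzRingType) (S : R -> Prop) : Type :=
| LC of R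
| LX of {s : R | S s}
| LAdd of lterm S & lterm S
| LOpp of lterm S
| LMul of lterm S & lterm S.

Arguments LX {R S}.

(* The congruence on terms whose quotient is R<S^{-1}> = R<X_S>/I_S :
   ring axioms, the ring structure of R, and the relations
   s x_s = 1, x_s s = 1 generating I_S. *)
Inductive lrel (R : pzRingType) (S : R -> Prop) : lterm S -> lterm S -> Prop :=
| lrel_refl t : lrel t t
| lrel_sym t u : lrel t u -> lrel u t
| lrel_trans t u v : lrel t u -> lrel u v -> lrel t v
| lrel_add t t' u u' : lrel t t' -> lrel u u' -> lrel (LAdd t u) (LAdd t' u')
| lrel_opp t t' : lrel t t' -> lrel (LOpp t) (LOpp t')
| lrel_mul t t' u u' : lrel t t' -> lrel u u' -> lrel (LMul t u) (LMul t' u')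
| lrel_addA t u v : lrel (LAdd t (LAdd u v)) (LAdd (LAdd t u) v)
| lrel_addC t u : lrel (LAdd t u) (LAdd u t)
| lrel_add0 t : lrel (LAdd (LC S 0) t) t
| lrel_addN t : lrel (LAdd (LOpp t) t) (LC S 0)
| lrel_mulA t u v : lrel (LMul t (LMul u v)) (LMul (LMul t u) v)
| lrel_mul1l t : lrel (LMul (LC S 1) t) t
| lrel_mul1r t : lrel (LMul t (LC S 1)) t
| lrel_mulDl t u v : lrel (LMul (LAdd t u) v) (LAdd (LMul t v) (LMul u v))
| lrel_mulDr t u v : lrel (LMul t (LAdd u v)) (LAdd (LMul t u) (LMul t v))
| lrel_Cadd a b : lrel (LAdd (LC S a) (LC S b)) (LC S (a + b))
| lrel_Cmul a b : lrel (LMul (LC S a) (LC S b)) (LC S (a * b))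
| lrel_invl (s : {s : R | S s}) : lrel (LMul (LC S (sval s)) (LX s)) (LC S 1)
| lrel_invr (s : {s : R | S s}) : lrel (LMul (LX s) (LC S (sval s))) (LC S 1).

(* ass_R(S) = ker (R -> R<S^{-1}>) *)
Definition ass (R : pzRingType) (S : R -> Prop) : R -> Prop :=
  fun r => lrel (LC S r) (LC S 0).

Definition localizable (R : pzRingType) (S : R -> Prop) : Prop :=
  ~ lrel (LC S 1) (LC S 0) /\
  forall t : lterm S,
    (exists (s : {s : R | S s}) r, lrel t (LMul (LX s) (LC S r))) /\
    (exists r' (s' : {s : R | S s}), lrel t (LMul (LC S r') (LX s'))).

Definition ore_ann (R : pzRingType) (S : R -> Prop) : R -> Prop :=
  fun r => exists s t, [/\ S s, S t & s * r * t = 0].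

Fixpoint leval (R : pzRingType) (S : R -> Prop) (Q : pzRingType)
    (g : R -> Q) (y : {s : R | S s} -> Q) (t : lterm S) : Q :=
  match t with
  | LC r => g r
  | LX s => y s
  | LAdd t u => leval g y t + leval g y u
  | LOpp t => - leval g y t
  | LMul t u => leval g y t * leval g y u
  end.

(* (Q, g) is, via g : R -> Q, the left Ore localization S̄^{-1} R̄ of
   R̄ = R/a at the image S̄ of S: g vanishes on a, so g = ḡ ∘ π with
   ḡ : R̄ -> Q, and ḡ is a left ring of fractions of R̄ w.r.t. S̄:
   (i) ḡ(s̄) is a unit for s ∈ S,
   (ii) every element of Q is ḡ(s̄)^{-1} ḡ(r̄),
   (iii) ker ḡ = {r̄ : s̄ r̄ = 0 for some s ∈ S}, i.e. g r = 0 iff s r ∈ a. *)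
Definition ore_localization_mod (R : pzRingType) (S : R -> Prop)
    (Q : pzRingType) (g : {rmorphism R -> Q}) : Prop :=
  [/\ (forall r, ore_ann S r -> g r = 0),
      (forall s, S s -> exists v, v * g s = 1 /\ g s * v = 1),
      (forall q, exists s r v, [/\ S s, v * g s = 1, g s * v = 1 & q = v * g r])
    & (forall r, g r = 0 <-> exists s, S s /\ ore_ann S (s * r))].

(* R<S^{-1}> is R-isomorphic to Q (as an R-ring via g): there is an
   R-ring homomorphism R<S^{-1}> -> Q (necessarily given by evaluation,
   r |-> g r, x_s |-> y s) which is well defined on the quotient,
   injective and surjective. *)
Definition R_isomorphic_loc (R : pzRingType) (S : R -> Prop)
    (Q : pzRingType) (g : R -> Q) : Prop :=
  exists y : {s : R | S s} -> Q,
    [/\ forall t u : lterm S, lrel t u -> leval g y t = leval g y u,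
        forall t u : lterm S, leval g y t = leval g y u -> lrel t u
      & forall q : Q, exists t : lterm S, leval g y t = q].

From HB Require Import structures.
From mathcomp Require Import all_boot all_order all_algebra generic_quotient.
From mathcomp Require Import boolp.
Set Implicit Arguments. Unset Strict Implicit. Unset Printing Implicit Defensive.
Import GRing.Theory.
Local Open Scope ring_scope.
Local Open Scope quotient_scope.

(* Once S is an Ore set, a = ore_ann S is a two-sided ideal of R.
   The left fractions s^-1 r (s in S, r in R), compared by bringing them to a
   common left denominator and reducing the numerators modulo a, form a left
   module over R<S^-1> in which r in R sends 1/1 to r/1.  Hence an r killed in
   R<S^-1> has r/1 = 0, i.e. s r in a for some s in S, and then r is in a;
   conversely s r t = 0 with s, t in S kills r in R<S^-1>, where s and t become
   units.  The Ore conditions move every x_s to the left (resp. right) of every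
   r, so each element of R<S^-1> is some x_s r and some r' x_s': S is
   localizable and R<S^-1> is itself the Ore localization of R/a. *)

Section LocalizationRing.
Variables (R : pzRingType) (S : R -> Prop).

HB.instance Definition _ := gen_eqMixin (lterm S).
HB.instance Definition _ := gen_choiceMixin (lterm S).

Definition lequiv : rel (lterm S) := fun t u => `[< lrel t u >].

Lemma lequivP t u : reflect (lrel t u) (lequiv t u).
Proof. exact: asboolP. Qed.

Lemma lequiv_refl : reflexive lequiv.
Proof. by move=> t; apply/lequivP/lrel_refl. Qed.
Lemma lequiv_sym : symmetric lequiv.
Proof. by move=> t u; apply/lequivP/lequivP => /lrel_sym. Qed.
Lemma lequiv_trans : transitive lequiv.
Proof. by move=> u t v /lequivP tu /lequivP uv; apply/lequivP/(lrel_trans tu uv). Qed.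

Canonical lequiv_equiv := EquivRel lequiv lequiv_refl lequiv_sym lequiv_trans.

Definition loc := {eq_quot lequiv}.
HB.instance Definition _ : EqQuotient _ lequiv loc := EqQuotient.on loc.
HB.instance Definition _ := Choice.on loc.

Lemma loc_eqP t u : \pi_loc t = \pi_loc u <-> lrel t u.
Proof. by split=> [/(eqquotP loc)/lequivP | /lequivP/(eqquotP loc)]. Qed.

Definition locC := lift_embed loc (LC S).
Canonical pi_locC := PiEmbed locC.

Definition loc_add := lift_op2 loc (@LAdd R S).
Lemma pi_loc_add : {morph \pi_loc : t u / LAdd t u >-> loc_add t u}.
Proof. by move=> t u; unlock loc_add; apply/loc_eqP/lrel_add; apply/loc_eqP; rewrite reprK. Qed.
Canonical pi_loc_add_morph := PiMorph2 pi_loc_add.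

Definition loc_opp := lift_op1 loc (@LOpp R S).
Lemma pi_loc_opp : {morph \pi_loc : t / LOpp t >-> loc_opp t}.
Proof. by move=> t; unlock loc_opp; apply/loc_eqP/lrel_opp/loc_eqP; rewrite reprK. Qed.
Canonical pi_loc_opp_morph := PiMorph1 pi_loc_opp.

Definition loc_mul := lift_op2 loc (@LMul R S).
Lemma pi_loc_mul : {morph \pi_loc : t u / LMul t u >-> loc_mul t u}.
Proof. by move=> t u; unlock loc_mul; apply/loc_eqP/lrel_mul; apply/loc_eqP; rewrite reprK. Qed.
Canonical pi_loc_mul_morph := PiMorph2 pi_loc_mul.

Ltac loc_law rule :=
  repeat (let q := fresh in move=> q; elim/quotW: q => ?);
  rewrite !piE; apply/loc_eqP; exact: rule.

Lemma loc_addA : associative loc_add. Proof. by loc_law lrel_addA. Qed.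
Lemma loc_addC : commutative loc_add. Proof. by loc_law lrel_addC. Qed.
Lemma loc_add0 : left_id (locC 0) loc_add. Proof. by loc_law lrel_add0. Qed.
Lemma loc_addN : left_inverse (locC 0) loc_opp loc_add. Proof. by loc_law lrel_addN. Qed.
Lemma loc_mulA : associative loc_mul. Proof. by loc_law lrel_mulA. Qed.
Lemma loc_mul1 : left_id (locC 1) loc_mul. Proof. by loc_law lrel_mul1l. Qed.
Lemma loc_mulr1 : right_id (locC 1) loc_mul. Proof. by loc_law lrel_mul1r. Qed.
Lemma loc_mulDl : left_distributive loc_mul loc_add. Proof. by loc_law lrel_mulDl. Qed.
Lemma loc_mulDr : right_distributive loc_mul loc_add. Proof. by loc_law lrel_mulDr. Qed.

HB.instance Definition _ := GRing.isPzRing.Build loc loc_addA loc_addC loc_add0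
  loc_addN loc_mulA loc_mul1 loc_mulr1 loc_mulDl loc_mulDr.

Lemma loc_addE t u : \pi_loc t + \pi_loc u = \pi_loc (LAdd t u).
Proof. exact/esym/pi_loc_add. Qed.
Lemma loc_oppE t : - \pi_loc t = \pi_loc (LOpp t).
Proof. exact/esym/pi_loc_opp. Qed.
Lemma loc_mulE t u : \pi_loc t * \pi_loc u = \pi_loc (LMul t u).
Proof. exact/esym/pi_loc_mul. Qed.

Lemma locCD : {morph locC : a b / a + b}.
Proof. by move=> a b; rewrite !piE; apply/loc_eqP/lrel_sym/lrel_Cadd. Qed.
Lemma locCM : {morph locC : a b / a * b}.
Proof. by move=> a b; rewrite !piE; apply/loc_eqP/lrel_sym/lrel_Cmul. Qed.

HB.instance Definition _ := GRing.isNmodMorphism.Build R loc locC (erefl, locCD).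
HB.instance Definition _ := GRing.isMonoidMorphism.Build R loc locC (erefl, locCM).

Lemma locC_eq0 r : locC r = 0 <-> ass S r.
Proof. by rewrite -[0]/(locC 0) !piE; apply: loc_eqP. Qed.

Definition locX (s : {s : R | S s}) : loc := \pi_loc (LX s).

Lemma mulX_locC s : locX s * locC (sval s) = 1.
Proof. by rewrite -[1]/(locC 1) !piE; apply/loc_eqP/lrel_invr. Qed.
Lemma mulC_locX s : locC (sval s) * locX s = 1.
Proof. by rewrite -[1]/(locC 1) !piE; apply/loc_eqP/lrel_invl. Qed.

Lemma leval_loc t : leval locC locX t = \pi t.
Proof.
elim: t => [r|s|t IHt u IHu|t IHt|t IHt u IHu] /=; rewrite ?IHt ?IHu.
- by rewrite piE.
- by [].
- exact: loc_addE.
- exact: loc_oppE.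
- exact: loc_mulE.
Qed.

End LocalizationRing.

Section OreSet.
Variables (R : pzRingType) (S : R -> Prop).
Hypothesis oreS : ore_set S.

Lemma ore1 : S 1. Proof. by case: oreS => -[]. Qed.
Lemma ore_neq0 : ~ S 0. Proof. by case: oreS => -[]. Qed.
Lemma oreM s t : S s -> S t -> S (s * t). Proof. by case: oreS => -[_ _ mulS] _; apply: mulS. Qed.
Lemma ore_left r s : S s -> exists s' r', S s' /\ s' * r = r' * s.
Proof. by move=> Ss; case: oreS => _ /(_ r s Ss) []. Qed.
Lemma ore_right r s : S s -> exists s' r', S s' /\ r * s' = s * r'.
Proof. by move=> Ss; case: oreS => _ /(_ r s Ss) []. Qed.

Local Notation ann := (ore_ann S).

Lemma ore_ann0 : ann 0.
Proof. by exists 1, 1; rewrite mulr0 mul0r; split=> //; apply: ore1. Qed.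

Lemma ore_annN x : ann x -> ann (- x).
Proof. by case=> s [t [Ss St e]]; exists s, t; rewrite mulrN mulNr e oppr0. Qed.

Lemma ore_annD x y : ann x -> ann y -> ann (x + y).
Proof.
case=> s1 [t1 [Ss1 St1 e1]] [s2 [t2 [Ss2 St2 e2]]].
have [u [v [Su euv]]] := ore_left s1 Ss2.
have [w [z [Sw ewz]]] := ore_right t1 St2.
exists (u * s1), (t1 * w); split; [exact: oreM | exact: oreM |].
have -> : u * s1 * (x + y) * (t1 * w) = u * (s1 * x * t1) * w + v * (s2 * y * t2) * z.
  by rewrite mulrDr mulrDl {2}ewz {2}euv !mulrA.
by rewrite e1 e2 !mulr0 !mul0r addr0.
Qed.

Lemma ore_annMl y x : ann x -> ann (y * x).
Proof.
case=> s [t [Ss St e]]; have [s' [r' [Ss' e']]] := ore_left y Ss.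
exists s', t; split=> //.
by rewrite mulrA e' -!mulrA (mulrA s) e mulr0.
Qed.

Lemma ore_annMr y x : ann x -> ann (x * y).
Proof.
case=> s [t [Ss St e]]; have [t' [r' [St' e']]] := ore_right y St.
exists s, t'; split=> //.
by rewrite -!mulrA e' !mulrA e mul0r.
Qed.

Lemma mulS_eq0_ore_ann x s : S s -> x * s = 0 -> ann x.
Proof. by move=> Ss e; exists 1, s; rewrite mul1r; split=> //; apply: ore1. Qed.

Lemma ore_ann_cancell s x : S s -> ann (s * x) -> ann x.
Proof.
move=> Ss [u [v [Su Sv e]]]; exists (u * s), v.
by rewrite -(mulrA u s x); split=> //; apply: oreM.
Qed.

Lemma ore_ann_cancelr t x : S t -> ann (x * t) -> ann x.
Proof.
move=> St [u [v [Su Sv e]]]; exists u, (t * v).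
by rewrite mulrA -(mulrA u x t); split=> //; apply: oreM.
Qed.

Lemma ore_ann1 : ~ ann 1.
Proof. by case=> s [t [Ss St e]]; apply: ore_neq0; rewrite -e mulr1; apply: oreM. Qed.

Definition eq_ann x y := ann (x - y).

Lemma eq_ann_refl x : eq_ann x x.
Proof. by rewrite /eq_ann subrr; apply: ore_ann0. Qed.

Lemma eq_ann_sym x y : eq_ann x y -> eq_ann y x.
Proof. by move=> xy; rewrite /eq_ann -opprB; apply: ore_annN. Qed.

Lemma eq_ann_trans y x z : eq_ann x y -> eq_ann y z -> eq_ann x z.
Proof. by rewrite /eq_ann => xy yz; rewrite -(subrKA y); apply: ore_annD. Qed.

Lemma eq_annD x x' y y' : eq_ann x x' -> eq_ann y y' -> eq_ann (x + y) (x' + y').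
Proof. by rewrite /eq_ann opprD addrACA; apply: ore_annD. Qed.

Lemma eq_annN x y : eq_ann x y -> eq_ann (- x) (- y).
Proof. by rewrite /eq_ann -opprD; apply: ore_annN. Qed.

Lemma eq_annMl z x y : eq_ann x y -> eq_ann (z * x) (z * y).
Proof. by rewrite /eq_ann -mulrBr; apply: ore_annMl. Qed.

Lemma eq_ann_cancell s x y : S s -> eq_ann (s * x) (s * y) -> eq_ann x y.
Proof. by rewrite /eq_ann -mulrBr; apply: ore_ann_cancell. Qed.

Lemma eq_ann_mulS s k k' r : S s -> eq_ann (k * s) (k' * s) -> eq_ann (k * r) (k' * r).
Proof. by rewrite /eq_ann -!mulrBl => Ss /(ore_ann_cancelr Ss); apply: ore_annMr. Qed.

(* Through this lemma, most identities between fractions reduce to exact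
   equalities in R. *)
Lemma mulS_eq_ann s k k' r : S s -> k * s = k' * s -> eq_ann (k * r) (k' * r).
Proof. by move=> Ss e; apply: (eq_ann_mulS r Ss); rewrite e; apply: eq_ann_refl. Qed.

Local Notation den := {s : R | S s}.

Lemma ore_left_den r (s : den) : exists p : den * R, sval p.1 * r = p.2 * sval s.
Proof.
have [s' [r' [Ss' e]]] := ore_left r (svalP s).
by exists (exist _ s' Ss', r').
Qed.

Definition lcomm r s : den * R := projT1 (cid (ore_left_den r s)).

Variant lcomm_spec r (s : den) : den * R -> Prop :=
  LcommSpec s' (Ss' : S s') r' of s' * r = r' * sval s :
    lcomm_spec r s (exist _ s' Ss', r').

Lemma lcommP r s : lcomm_spec r s (lcomm r s).
Proof. by rewrite /lcomm; case: cid => -[[s' Ss'] r'] /= e; apply: LcommSpec. Qed.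

(* (s, r) stands for s^-1 r.  For (p, q) = lcomm x s, i.e. p x = q s, one has
   x s^-1 = p^-1 q; this dictates frac_mulC and, with x := s', frac_add, while
   x_t s^-1 = (s t)^-1 gives frac_mulX. *)
Definition frac := (den * R)%type.

Definition den1 : den := exist _ 1 ore1.
Definition denM (s t : den) : den := exist _ (sval s * sval t) (oreM (svalP s) (svalP t)).

Definition frac0 : frac := (den1, 0).
Definition frac_opp (m : frac) : frac := (m.1, - m.2).
Definition frac_add (m m' : frac) : frac :=
  let p := lcomm (sval m'.1) m.1 in (denM p.1 m'.1, p.2 * m.2 + sval p.1 * m'.2).
Definition frac_mulC x (m : frac) : frac := let p := lcomm x m.1 in (p.1, p.2 * m.2).
Definition frac_mulX (t : den) (m : frac) : frac := (denM m.1 t, m.2).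

(* Quantifying over all common left multiples makes transitivity easy;
   frac_eqv_intro shows that one of them suffices. *)
Record frac_eqv (m m' : frac) : Prop := FracEqv {
  frac_eqv_num : forall c c', c * sval m.1 = c' * sval m'.1 ->
    S (c * sval m.1) -> eq_ann (c * m.2) (c' * m'.2) }.

Lemma frac_eqv_intro m m' c c' :
    c * sval m.1 = c' * sval m'.1 -> S (c * sval m.1) ->
  eq_ann (c * m.2) (c' * m'.2) -> frac_eqv m m'.
Proof.
case: m => [[s Ss] r]; case: m' => [[s' Ss'] r'] /= e Scs h; split=> d d' /= e' Sds.
have [f [k [Sf efk]]] := ore_left (d * s) Scs.
apply: (eq_ann_cancell Sf); apply: (eq_ann_trans (y := k * (c * r))).
  by rewrite !mulrA; apply: (mulS_eq_ann _ Ss); rewrite -!mulrA efk.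
apply: eq_ann_trans (eq_annMl k h) _.
by rewrite !mulrA; apply: (mulS_eq_ann _ Ss'); rewrite -!mulrA -e -e' efk.
Qed.

Lemma frac_eqv_refl m : frac_eqv m m.
Proof. by split=> c c' e _; apply: (mulS_eq_ann _ (svalP m.1)). Qed.

Lemma frac_eqv_sym m m' : frac_eqv m m' -> frac_eqv m' m.
Proof. by move=> [h]; split=> c c' e Sc; apply/eq_ann_sym/h; rewrite -?e. Qed.

Lemma frac_eqv_trans m2 m1 m3 : frac_eqv m1 m2 -> frac_eqv m2 m3 -> frac_eqv m1 m3.
Proof.
case: m1 => [[s1 Ss1] r1]; case: m2 => [[s2 Ss2] r2]; case: m3 => [[s3 Ss3] r3] /=.
move=> [eqv12] [eqv23]; split=> c c' /= e Sc.
have [f [k [Sf efk]]] := ore_left (c * s1) Ss2.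
apply: (eq_ann_cancell Sf); apply: (eq_ann_trans (y := k * r2)).
  by rewrite mulrA; apply: eqv12; rewrite /= -mulrA //; apply: oreM.
by rewrite mulrA; apply: eqv23; rewrite /= -efk; [rewrite e mulrA | apply: oreM].
Qed.

Lemma frac_add_eqvl m1 m2 m : frac_eqv m1 m2 -> frac_eqv (frac_add m1 m) (frac_add m2 m).
Proof.
case: m1 => [[s1 Ss1] r1]; case: m2 => [[s2 Ss2] r2]; case: m => [[t St] u] [h].
rewrite /frac_add /=.
case: (lcommP t (exist _ s1 Ss1)) => c Sc c' e1.
case: (lcommP t (exist _ s2 Ss2)) => e Se e' e2; split=> d d' /= ed Sd.
rewrite !mulrDr !mulrA; apply: eq_annD.
  by apply: h; rewrite /= -!mulrA -?e1 -?e2.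
by apply: (mulS_eq_ann _ St); rewrite -!mulrA.
Qed.

Lemma frac_addC m m' : frac_eqv (frac_add m m') (frac_add m' m).
Proof.
case: m => [[s Ss] r]; case: m' => [[s' Ss'] r']; rewrite /frac_add /=.
case: (lcommP s' (exist _ s Ss)) => c Sc c' e1.
case: (lcommP s (exist _ s' Ss')) => e Se e' e2; split=> d d' /= ed Sd.
rewrite !mulrDr !mulrA [d' * e' * r' + _]addrC; apply: eq_annD.
  by apply: (mulS_eq_ann _ Ss); rewrite -!mulrA -e1.
by apply: (mulS_eq_ann _ Ss'); rewrite -!mulrA -e2.
Qed.

Lemma frac_add_eqvr m m1 m2 : frac_eqv m1 m2 -> frac_eqv (frac_add m m1) (frac_add m m2).
Proof.
move=> h; apply: frac_eqv_trans (frac_addC _ _) _.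
exact: frac_eqv_trans (frac_add_eqvl _ h) (frac_addC _ _).
Qed.

Lemma frac_add_eqv m1 m2 m3 m4 :
  frac_eqv m1 m2 -> frac_eqv m3 m4 -> frac_eqv (frac_add m1 m3) (frac_add m2 m4).
Proof. by move=> h1 h2; apply: frac_eqv_trans (frac_add_eqvl _ h1) (frac_add_eqvr _ h2). Qed.

Lemma frac_addA m1 m2 m3 :
  frac_eqv (frac_add (frac_add m1 m2) m3) (frac_add m1 (frac_add m2 m3)).
Proof.
case: m1 => [[s1 Ss1] r1]; case: m2 => [[s2 Ss2] r2]; case: m3 => [[s3 Ss3] r3].
rewrite /frac_add /=.
case: (lcommP s2 (exist _ s1 Ss1)) => c Sc c' e1 /=.
case: (lcommP s3 (denM (exist _ c Sc) (exist _ s2 Ss2))) => e Se e' e2.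
case: (lcommP s3 (exist _ s2 Ss2)) => f Sf f' e3 /=.
case: (lcommP (f * s3) (exist _ s1 Ss1)) => h Sh h' e4; split=> d d' /= ed Sd.
rewrite !mulrDr !mulrA -addrA; apply: eq_annD; [|apply: eq_annD].
- by apply: (mulS_eq_ann _ Ss1); rewrite -!mulrA -e4 -e1 -e2.
- by apply: (mulS_eq_ann _ Ss2); rewrite -!mulrA -e2 -e3.
- by apply: (mulS_eq_ann _ Ss3); rewrite -!mulrA.
Qed.

Lemma frac_add0 m : frac_eqv (frac_add frac0 m) m.
Proof.
case: m => [[s Ss] r]; rewrite /frac_add /=.
case: lcommP => c Sc c' e1; split=> d d' /= ed Sd.
by rewrite mulr0 add0r mulrA; apply: (mulS_eq_ann _ Ss); rewrite -mulrA.
Qed.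

Lemma frac_addN m : frac_eqv (frac_add (frac_opp m) m) frac0.
Proof.
case: m => [[s Ss] r]; rewrite /frac_add /frac_opp /=.
case: lcommP => c Sc c' e1; split=> d d' /= ed Sd.
rewrite mulr0 mulrDr !mulrN addrC !mulrA /eq_ann subr0.
by apply: (mulS_eq_ann _ Ss); rewrite -!mulrA e1.
Qed.

Lemma frac_addACA m1 m2 m3 m4 : frac_eqv (frac_add (frac_add m1 m2) (frac_add m3 m4))
  (frac_add (frac_add m1 m3) (frac_add m2 m4)).
Proof.
apply: frac_eqv_trans (frac_addA _ _ _) _.
apply: frac_eqv_trans (frac_add_eqvr _ (frac_eqv_sym (frac_addA _ _ _))) _.
apply: frac_eqv_trans (frac_add_eqvr _ (frac_add_eqvl _ (frac_addC _ _))) _.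
apply: frac_eqv_trans (frac_add_eqvr _ (frac_addA _ _ _)) _.
exact: frac_eqv_sym (frac_addA _ _ _).
Qed.

Lemma frac_opp_eqv m1 m2 : frac_eqv m1 m2 -> frac_eqv (frac_opp m1) (frac_opp m2).
Proof. by move=> [h]; split=> c c' e Sc; rewrite /= !mulrN; apply/eq_annN/h. Qed.

Lemma frac_oppD m m' : frac_opp (frac_add m m') = frac_add (frac_opp m) (frac_opp m').
Proof. by rewrite /frac_add /frac_opp /= opprD !mulrN. Qed.

Lemma frac_mulC_eqv x m1 m2 : frac_eqv m1 m2 -> frac_eqv (frac_mulC x m1) (frac_mulC x m2).
Proof.
case: m1 => [[s1 Ss1] r1]; case: m2 => [[s2 Ss2] r2] [h]; rewrite /frac_mulC /=.
case: (lcommP x (exist _ s1 Ss1)) => p Sp q e1.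
case: (lcommP x (exist _ s2 Ss2)) => p' Sp' q' e2 /=.
have [k [k' [Sk ek]]] := ore_left p Sp'.
have [l [l' [Sl el]]] := ore_left s1 Ss2.
have [z [y [Sz ezy]]] := ore_left (k * q) Sl.
have num12 : eq_ann (l * r1) (l' * r2) by apply: h => //; apply: oreM.
apply: (frac_eqv_intro (c := z * k) (c' := z * k')) => /=.
- by rewrite -!mulrA ek.
- by rewrite -mulrA; apply/oreM/oreM.
apply: (eq_ann_trans (y := y * (l' * r2))).
  by rewrite !mulrA -(mulrA z) ezy -!mulrA; apply: eq_annMl num12.
rewrite mulrA (mulrA (z * k')); apply: (mulS_eq_ann _ Ss2).
have -> : y * l' * s2 = z * k * q * s1 by rewrite -(mulrA y) -el mulrA -ezy mulrA.
by rewrite -(mulrA _ q) -e1 mulrA -(mulrA z) ek mulrA -!mulrA e2.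
Qed.

Lemma frac_mulC_addr x m m' :
  frac_eqv (frac_mulC x (frac_add m m')) (frac_add (frac_mulC x m) (frac_mulC x m')).
Proof.
case: m => [[s Ss] r]; case: m' => [[s' Ss'] r']; rewrite /frac_add /frac_mulC /=.
case: (lcommP s' (exist _ s Ss)) => c Sc c' e1 /=.
case: (lcommP x (denM (exist _ c Sc) (exist _ s' Ss'))) => p Sp q e2.
case: (lcommP x (exist _ s Ss)) => p1 Sp1 q1 e3.
case: (lcommP x (exist _ s' Ss')) => p2 Sp2 q2 e4 /=.
case: (lcommP p2 (exist _ p1 Sp1)) => h Sh h' e5; split=> d d' /= ed Sd.
rewrite !mulrDr !mulrA; apply: eq_annD.
- apply: (mulS_eq_ann _ Ss).
  have -> : d * q * c' * s = d * p * x by rewrite -!mulrA -e1 e2.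
  have -> : d' * h' * q1 * s = d' * (h * p2) * x by rewrite e5 -!mulrA e3.
  by rewrite ed mulrA.
- apply: (mulS_eq_ann _ Ss').
  have -> : d * q * c * s' = d * p * x by rewrite -!mulrA e2.
  have -> : d' * h * q2 * s' = d' * (h * p2) * x by rewrite -!mulrA e4.
  by rewrite ed.
Qed.

Lemma frac_mulC_addl x y m :
  frac_eqv (frac_mulC (x + y) m) (frac_add (frac_mulC x m) (frac_mulC y m)).
Proof.
case: m => [[s Ss] r]; rewrite /frac_add /frac_mulC /=.
case: (lcommP (x + y) (exist _ s Ss)) => p Sp q e0.
case: (lcommP x (exist _ s Ss)) => p1 Sp1 q1 e1.
case: (lcommP y (exist _ s Ss)) => p2 Sp2 q2 e2 /=.
case: (lcommP p2 (exist _ p1 Sp1)) => h Sh h' e3; split=> d d' /= ed Sd.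
rewrite !mulrDr !mulrA -mulrDl; apply: (mulS_eq_ann _ Ss).
rewrite mulrDl.
have -> : d' * h' * q1 * s = d' * h * p2 * x by rewrite -!mulrA -e1 (mulrA h') -e3 !mulrA.
have -> : d' * h * q2 * s = d' * h * p2 * y by rewrite -!mulrA -e2.
by rewrite -mulrDr -!mulrA -e0 !mulrA ed !mulrA.
Qed.

Lemma frac_mulCM x y m : frac_eqv (frac_mulC x (frac_mulC y m)) (frac_mulC (x * y) m).
Proof.
case: m => [[s Ss] r]; rewrite /frac_mulC /=.
case: (lcommP y (exist _ s Ss)) => p Sp q e1 /=.
case: (lcommP x (exist _ p Sp)) => p' Sp' q' e2.
case: (lcommP (x * y) (exist _ s Ss)) => p'' Sp'' q'' e3; split=> d d' /= ed Sd.
rewrite !mulrA; apply: (mulS_eq_ann _ Ss).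
by rewrite -!mulrA -e1 -e3 !mulrA -(mulrA d q') -e2 !mulrA ed.
Qed.

Lemma frac_mulC1 m : frac_eqv (frac_mulC 1 m) m.
Proof.
case: m => [[s Ss] r]; rewrite /frac_mulC /=.
case: lcommP => p Sp q e1; split=> d d' /= ed Sd.
by rewrite mulrA; apply: (mulS_eq_ann _ Ss); rewrite -mulrA -e1 mulr1.
Qed.

Lemma frac_mulC0 m : frac_eqv (frac_mulC 0 m) frac0.
Proof.
case: m => [[s Ss] r]; rewrite /frac_mulC /=.
case: lcommP => p Sp q e1; split=> d d' /= ed Sd.
rewrite mulr0 mulrA -(mul0r r); apply: (mulS_eq_ann _ Ss).
by rewrite -mulrA -e1 !mulr0 !mul0r.
Qed.

Lemma frac_mulX_eqv t m1 m2 : frac_eqv m1 m2 -> frac_eqv (frac_mulX t m1) (frac_mulX t m2).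
Proof.
case: m1 => [[s1 Ss1] r1]; case: m2 => [[s2 Ss2] r2]; case: t => [t St] [h] /=.
have [l [l' [Sl el]]] := ore_left s1 Ss2.
apply: (frac_eqv_intro (c := l) (c' := l')) => /=.
- by rewrite !mulrA el.
- by rewrite mulrA; apply/oreM/St/oreM.
by apply: h => //; apply: oreM.
Qed.

Lemma frac_mulX_addr t m m' :
  frac_eqv (frac_mulX t (frac_add m m')) (frac_add (frac_mulX t m) (frac_mulX t m')).
Proof.
case: m => [[s Ss] r]; case: m' => [[s' Ss'] r']; case: t => [t St].
rewrite /frac_add /frac_mulX /=.
case: (lcommP s' (exist _ s Ss)) => c Sc c' e1 /=.
case: (lcommP (s' * t) (denM (exist _ s Ss) (exist _ t St))) => h Sh h' e2.
split=> d d' /= ed Sd; rewrite -!mulrA in ed.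
rewrite !mulrDr !mulrA; apply: eq_annD.
- apply: (mulS_eq_ann _ (oreM Ss St)).
  by rewrite -!mulrA -e2 (mulrA c') -e1 -!mulrA.
- by apply: (mulS_eq_ann _ (oreM Ss' St)); rewrite -!mulrA.
Qed.

Lemma frac_mulCX (t : den) m : frac_eqv (frac_mulC (sval t) (frac_mulX t m)) m.
Proof.
case: m => [[s Ss] r]; case: t => [t St]; rewrite /frac_mulC /frac_mulX /=.
case: lcommP => p Sp q e1; split=> d d' /= ed Sd.
rewrite mulrA; apply: (eq_ann_mulS _ Ss).
have qs_p : eq_ann (q * s) p by apply: (mulS_eq0_ore_ann St); rewrite mulrBl -mulrA -e1 subrr.
by rewrite -mulrA -ed; apply: eq_annMl qs_p.
Qed.

Lemma frac_mulXC (t : den) m : frac_eqv (frac_mulX t (frac_mulC (sval t) m)) m.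
Proof.
case: m => [[s Ss] r]; case: t => [t St]; rewrite /frac_mulC /frac_mulX /=.
case: lcommP => p Sp q e1; split=> d d' /= ed Sd.
by rewrite mulrA; apply: (mulS_eq_ann _ Ss); rewrite -mulrA -e1.
Qed.

Fixpoint frac_act (t : lterm S) (m : frac) : frac :=
  match t with
  | LC x => frac_mulC x m
  | LX s => frac_mulX s m
  | LAdd t u => frac_add (frac_act t m) (frac_act u m)
  | LOpp t => frac_opp (frac_act t m)
  | LMul t u => frac_act t (frac_act u m)
  end.

Lemma frac_act_eqv t m m' : frac_eqv m m' -> frac_eqv (frac_act t m) (frac_act t m').
Proof.
elim: t m m' => [x|s|t IHt u IHu|t IHt|t IHt u IHu] m m' h /=.
- exact: frac_mulC_eqv.
- exact: frac_mulX_eqv.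
- exact: frac_add_eqv (IHt _ _ h) (IHu _ _ h).
- exact: frac_opp_eqv (IHt _ _ h).
- exact: IHt (IHu _ _ h).
Qed.

Lemma frac_actD t m m' :
  frac_eqv (frac_act t (frac_add m m')) (frac_add (frac_act t m) (frac_act t m')).
Proof.
elim: t m m' => [x|s|t IHt u IHu|t IHt|t IHt u IHu] m m' /=.
- exact: frac_mulC_addr.
- exact: frac_mulX_addr.
- exact: frac_eqv_trans (frac_add_eqv (IHt m m') (IHu m m')) (frac_addACA _ _ _ _).
- by rewrite -frac_oppD; apply: frac_opp_eqv.
- exact: frac_eqv_trans (frac_act_eqv t (IHu m m')) (IHt _ _).
Qed.

Lemma lrel_frac_act m t u : lrel t u -> frac_eqv (frac_act t m) (frac_act u m).
Proof.
move=> tu; elim: tu m => {t u} /=.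
- by move=> t m; apply: frac_eqv_refl.
- by move=> t u _ IH m; apply: frac_eqv_sym (IH m).
- by move=> t u v _ IH1 _ IH2 m; apply: frac_eqv_trans (IH1 m) (IH2 m).
- by move=> t t' u u' _ IH1 _ IH2 m; apply: frac_add_eqv (IH1 m) (IH2 m).
- by move=> t t' _ IH m; apply: frac_opp_eqv (IH m).
- by move=> t t' u u' _ IH1 _ IH2 m; apply: frac_eqv_trans (IH1 _) (frac_act_eqv t' (IH2 m)).
- by move=> t u v m; apply/frac_eqv_sym/frac_addA.
- by move=> t u m; apply: frac_addC.
- by move=> t m; apply: frac_eqv_trans (frac_add_eqvl _ (frac_mulC0 _)) (frac_add0 _).
- by move=> t m; apply: frac_eqv_trans (frac_addN _) (frac_eqv_sym (frac_mulC0 _)).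
- by move=> t u v m; apply: frac_eqv_refl.
- by move=> t m; apply: frac_mulC1.
- by move=> t m; apply/frac_act_eqv/frac_mulC1.
- by move=> t u v m; apply: frac_eqv_refl.
- by move=> t u v m; apply: frac_actD.
- by move=> x y m; apply/frac_eqv_sym/frac_mulC_addl.
- by move=> x y m; apply: frac_mulCM.
- by move=> s m; apply: frac_eqv_trans (frac_mulCX _ _) (frac_eqv_sym (frac_mulC1 _)).
- by move=> s m; apply: frac_eqv_trans (frac_mulXC _ _) (frac_eqv_sym (frac_mulC1 _)).
Qed.

Lemma ass_ore_ann r : ass S r -> ore_ann S r.
Proof.
move=> /(lrel_frac_act (den1, 1)) [/=]; rewrite /frac_mulC /=.
case: (lcommP r den1) => p Sp q e1.
case: (lcommP 0 den1) => p0 Sp0 q0 e0 /= h.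
have [k [k' [Sk ek]]] := ore_left p Sp0.
have := h k k' ek (oreM Sk Sp).
rewrite mulr0 mulr1 in e0; rewrite mulr1 in e1.
rewrite !mulr1 -e0 -e1 mulr0 /eq_ann subr0 mulrA.
exact: ore_ann_cancell (oreM Sk Sp).
Qed.

Lemma locC_ore_ann r : ore_ann S r -> locC S r = 0.
Proof.
case=> s [t [Ss St e]].
have -> : locC S r = locX (exist _ s Ss) * locC S (s * r * t) * locX (exist _ t St).
  by rewrite !rmorphM !mulrA mulX_locC mul1r -mulrA (mulC_locX (exist _ t St)) mulr1.
by rewrite e rmorph0 mulr0 mul0r.
Qed.

Lemma ass_ore_annE r : ass S r <-> ore_ann S r.
Proof. by rewrite -locC_eq0; split=> [/locC_eq0/ass_ore_ann | /locC_ore_ann]. Qed.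

Lemma locX_uniql s z : z * locC S (sval s) = 1 -> z = locX s.
Proof. by move=> h; rewrite -[z]mulr1 -(mulC_locX s) mulrA h mul1r. Qed.

Lemma locX_uniqr s z : locC S (sval s) * z = 1 -> z = locX s.
Proof. by move=> h; rewrite -[z]mul1r -(mulX_locC s) -mulrA h mulr1. Qed.

Lemma locX1 : locX den1 = 1.
Proof. by apply/esym/locX_uniql; rewrite mul1r rmorph1. Qed.

Lemma loc_left_fraction t : exists s r, \pi_(loc S) t = locX s * locC S r.
Proof.
elim: t => [x|s|t [s1 [a1 IH1]] u [s2 [b IH2]]|t [s1 [a1 IH1]]|t [s1 [a1 IH1]] u [s2 [b IH2]]].
- by exists den1, x; rewrite locX1 mul1r piE.
- by exists s, 1; rewrite rmorph1 mulr1.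
- have [s' [r' [Ss' e]]] := ore_left (sval s2) (svalP s1).
  pose D := denM (exist _ s' Ss') s2.
  have E1 : locX s1 = locX D * locC S r'.
    by apply/esym/locX_uniql; rewrite -mulrA -rmorphM -e; apply: (mulX_locC D).
  have E2 : locX s2 = locX D * locC S s'.
    by apply/esym/locX_uniql; rewrite -mulrA -rmorphM; apply: (mulX_locC D).
  exists D, (r' * a1 + s' * b).
  by rewrite -loc_addE IH1 IH2 E1 E2 rmorphD !rmorphM mulrDr !mulrA.
- by exists s1, (- a1); rewrite -loc_oppE IH1 rmorphN mulrN.
- have [s' [r' [Ss' e]]] := ore_left a1 (svalP s2).
  pose s'' := exist S s' Ss'.
  have E : locC S a1 * locX s2 = locX s'' * locC S r'.
    rewrite -[locC S a1 * _]mul1r -(mulX_locC s'') /= -!mulrA (mulrA (locC S s')).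
    by rewrite -rmorphM e rmorphM -(mulrA (locC S r')) mulC_locX mulr1.
  pose D := denM s'' s1.
  have E2 : locX s1 * locX s'' = locX D.
    apply: locX_uniql; rewrite /= rmorphM -mulrA (mulrA (locX s'')) mulX_locC mul1r.
    exact: mulX_locC.
  exists D, (r' * b).
  rewrite -loc_mulE IH1 IH2 -(mulrA (locX s1)) (mulrA (locC S a1)) E.
  by rewrite -!mulrA (mulrA (locX s1)) E2 rmorphM mulrA.
Qed.

Lemma loc_right_fraction t : exists r s, \pi_(loc S) t = locC S r * locX s.
Proof.
elim: t => [x|s|t [a1 [s1 IH1]] u [b [s2 IH2]]|t [a1 [s1 IH1]]|t [a1 [s1 IH1]] u [b [s2 IH2]]].
- by exists x, den1; rewrite locX1 mulr1 piE.
- by exists 1, s; rewrite rmorph1 mul1r.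
- have [w [z [Sw e]]] := ore_right (sval s2) (svalP s1).
  pose D := denM s2 (exist _ w Sw).
  have E1 : locX s1 = locC S z * locX D.
    by apply/esym/locX_uniqr; rewrite mulrA -rmorphM -e; apply: (mulC_locX D).
  have E2 : locX s2 = locC S w * locX D.
    by apply/esym/locX_uniqr; rewrite mulrA -rmorphM; apply: (mulC_locX D).
  exists (a1 * z + b * w), D.
  by rewrite -loc_addE IH1 IH2 E1 E2 rmorphD !rmorphM mulrDl !mulrA.
- by exists (- a1), s1; rewrite -loc_oppE IH1 rmorphN mulNr.
- have [w [z [Sw e]]] := ore_right b (svalP s1).
  pose w' := exist S w Sw.
  have E : locX s1 * locC S b = locC S z * locX w'.
    rewrite -[locX s1 * _]mulr1 -(mulC_locX w') /= mulrA -(mulrA (locX s1)).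
    by rewrite -rmorphM e rmorphM mulrA mulX_locC mul1r.
  pose D := denM s2 w'.
  have E2 : locX w' * locX s2 = locX D.
    apply: locX_uniqr; rewrite /= rmorphM -mulrA (mulrA (locC S w)) (mulC_locX w') mul1r.
    exact: mulC_locX.
  exists (a1 * z), D.
  rewrite -loc_mulE IH1 IH2 -(mulrA (locC S a1)) (mulrA (locX s1)) E.
  by rewrite -!mulrA E2 rmorphM mulrA.
Qed.

Lemma ore_localizable : localizable S.
Proof.
split=> [/ass_ore_ann/ore_ann1 // | t]; split.
- have [s [r e]] := loc_left_fraction t.
  by exists s, r; apply/loc_eqP; rewrite e /locX piE.
- have [r [s e]] := loc_right_fraction t.
  by exists r, s; apply/loc_eqP; rewrite e /locX piE.
Qed.

Lemma ore_localization_mod_locC : ore_localization_mod S (locC S).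
Proof.
split.
- exact: locC_ore_ann.
- by move=> s Ss; exists (locX (exist _ s Ss)); rewrite mulX_locC (mulC_locX (exist _ s Ss)).
- elim/quotW=> t; have [s [r e]] := loc_left_fraction t.
  by exists (sval s), r, (locX s); rewrite mulX_locC mulC_locX e; split=> //; apply: svalP.
- move=> r; split=> [/locC_eq0/ass_ore_ann ann_r | [s [Ss /locC_ore_ann]]].
    by exists 1; rewrite mul1r; split=> //; apply: ore1.
  rewrite rmorphM => sr0.
  by rewrite -[X in X = 0]mul1r -(mulX_locC (exist _ s Ss)) -mulrA sr0 mulr0.
Qed.

Lemma R_isomorphic_loc_locC : R_isomorphic_loc S (locC S).
Proof.
exists (@locX _ S); split=> [t u | t u | ]; rewrite ?leval_loc.
- by move=> /loc_eqP.
- by move=> /loc_eqP.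
- by elim/quotW=> t; exists t; rewrite leval_loc.
Qed.

End OreSet.

Theorem theorem3p1 :
  (forall (R : pzRingType) (S : R -> Prop), ore_set S -> localizable S) /\
  (forall (R : pzRingType) (S : R -> Prop), ore_set S ->
     [/\ localizable S,
         (forall r : R, ass S r <-> ore_ann S r)
       & exists (Q : pzRingType) (g : {rmorphism R -> Q}),
           ore_localization_mod S g /\ R_isomorphic_loc S g]).
Proof.
split=> R S oreS; first exact: ore_localizable.
split; [exact: ore_localizable | exact: ass_ore_annE |].
exists (loc S), (locC S).
by split; [apply: ore_localization_mod_locC | apply: R_isomorphic_loc_locC].
Qed.
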